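(* The map $\phi$ from nonempty faces of $V_0$ to $\mathcal{SC}(\mathcal M)$ is injective and order-preserving: if $F_1\subseteq F_2$ are faces of $V_0$, then $\phi(F_1)\le\phi(F_2)$.
   Context: Let $\mathcal M$ be a regular matroid on a finite ground set $E$, represented by a totally unimodular matrix $M$ with columns $c_e$; $\mathcal F=\ker M\subseteq\mathbb R^E$ with Euclidean inner product, $\Lambda=\ker M\cap\mathbb Z^E$, $V_0=\{x\in\mathcal F:\|x\|\le\|x-\mu\|\ \forall\mu\in\Lambda\}$. A circuit in $\Lambda$ is a flow with coordinates in $\{-1,0,1\}$ whose support is a circuit (minimal dependent set of columns) of $\mathcal M$; $\Xi$ is the set of these. For $\gamma\in\Xi$, $F_\gamma=\{x\in\mathcal F:2\langle x,\gamma\rangle=\|\gamma\|^2\}$. An oriented submatroid is $(S,\varepsilon)$, $S\subseteq E$, $\varepsilon:S\to\{\pm1\}$; it is strongly connected if for every $e\in S$ there is $w\in\mathbb Z_{\ge0}^S$ with $w_e\ge1$ and $\sum_{f\in S}w_f\varepsilon_fc_f=0$. $\mathcal{SC}(\mathcal M)$ is the set of these, ordered by $(S,\varepsilon)\le(S',\varepsilon')$ iff $S'\subseteq S$ and $\varepsilon'=\varepsilon|_{S'}$. For a nonempty face $F$ of $V_0$, $\mathcal U(F)=\{\gamma\in\Xi:F\subseteq F_\gamma\}$ and $\phi(F)=(S,\varepsilon)$ with $S=\bigcup_{\gamma\in\mathcal U(F)}\operatorname{supp}\gamma$ and $\varepsilon_e=\operatorname{sgn}\gamma_e$ for any $\gamma\in\mathcal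 U(F)$ with $e\in\operatorname{supp}\gamma$ (well defined). *)

From HB Require Import structures.
From mathcomp Require Import all_boot all_order all_algebra.
From mathcomp Require Import boolp reals.
From Stdlib Require Import ClassicalEpsilon.
Set Implicit Arguments. Unset Strict Implicit. Unset Printing Implicit Defensive.
Import Order.TTheory GRing.Theory Num.Theory.
Local Open Scope ring_scope.

Section Defs.
Variables (R : realType) (m n : nat) (M : 'M[R]_(m, n)).

Definition totally_unimodular : Prop :=
  forall (k : nat) (f : 'I_k -> 'I_m) (g : 'I_k -> 'I_n),
    \det (mxsub f g M) \in [:: -1; 0; 1].

Definition dot (x y : 'cV[R]_n) : R := \sum_i x i 0 * y i 0.

Definition inF (x : 'cV[R]_n) : Prop := M *m x = 0.

Definition inLambda (mu : 'cV[R]_n) : Prop :=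
  inF mu /\ forall i, mu i 0 \is a Num.int.

Definition V0 (x : 'cV[R]_n) : Prop :=
  inF x /\ forall mu, inLambda mu -> dot x x <= dot (x - mu) (x - mu).

(* nonempty faces of V_0: intersections of V_0 with supporting hyperplanes
   (the choice a = 0, b = 0 gives V_0 itself) *)
Definition nonempty_face (Fc : 'cV[R]_n -> Prop) : Prop :=
  (exists x, Fc x) /\
  exists (a : 'cV[R]_n) (b : R),
    (forall x, V0 x -> dot a x <= b) /\
    (forall x, Fc x <-> (V0 x /\ dot a x = b)).

Definition supp (x : 'cV[R]_n) : {set 'I_n} := [set i | x i 0 != 0].

Definition dependent (S : {set 'I_n}) : Prop :=
  exists x : 'cV[R]_n, x != 0 /\ M *m x = 0 /\ supp x \subset S.

Definition matroid_circuit (S : {set 'I_n}) : Prop :=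
  dependent S /\ forall T : {set 'I_n}, T \proper S -> ~ dependent T.

Definition Xi (g : 'cV[R]_n) : Prop :=
  inLambda g /\ (forall i, g i 0 \in [:: -1; 0; 1]) /\ matroid_circuit (supp g).

Definition Fgamma (g x : 'cV[R]_n) : Prop := inF x /\ 2 * dot x g = dot g g.

Definition U (Fc : 'cV[R]_n -> Prop) (g : 'cV[R]_n) : Prop :=
  Xi g /\ forall x, Fc x -> Fgamma g x.

(* oriented submatroids (S, eps): eps is only meaningful on S *)
Definition osm := ({set 'I_n} * ('I_n -> R))%type.

Definition osm_eq (p q : osm) : Prop :=
  p.1 = q.1 /\ forall e, e \in p.1 -> p.2 e = q.2 e.

Definition osm_le (p q : osm) : Prop :=
  q.1 \subset p.1 /\ forall e, e \in q.1 -> q.2 e = p.2 e.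

Definition phiS (Fc : 'cV[R]_n -> Prop) : {set 'I_n} :=
  [set e | `[< exists g, U Fc g /\ e \in supp g >]].

Definition phiEps (Fc : 'cV[R]_n -> Prop) (e : 'I_n) : R :=
  Num.sg ((epsilon (inhabits (0 : 'cV[R]_n))
             (fun g => U Fc g /\ e \in supp g)) e 0).

Definition phi (Fc : 'cV[R]_n -> Prop) : osm := (phiS Fc, phiEps Fc).

End Defs.

(* The Voronoi cell is cut out by the inequalities 2<x,c> <= |c|^2 over the
   flows c with entries in {-1,0,1}: total unimodularity makes every lattice
   flow a conformal sum of circuits, whence 2<x,mu> <= |mu|_1 <= |mu|^2.
   For a face F, such a c is tight on F exactly when its signs conform to
   phi(F): a tight c splits into a tight circuit plus a tight remainder, and
   conversely the sum of the circuits witnessing phi(F) is tight on F and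
   contains c with the right signs.  So phi(F) decides which of the finitely
   many constraints are tight on F.  If phi(F1) = phi(F2) and y lies in F1,
   stepping slightly beyond a relative-interior point x0 of F2, away from y,
   stays in the cell; the supporting hyperplane of F2 through x0 then forces
   y onto it.  Monotonicity holds because U(F) grows as F shrinks. *)

From HB Require Import structures.
From mathcomp Require Import all_boot all_order all_algebra.
From mathcomp Require Import boolp reals ring lra.
From Stdlib Require Import ClassicalEpsilon.
Import Order.TTheory GRing.Theory Num.Theory.
Local Open Scope ring_scope.
Set Implicit Arguments. Unset Strict Implicit. Unset Printing Implicit Defensive.

Section SmallSteps.
Variable R : realFieldType.

Lemma small_step_le (a b d : R) : a <= b -> (a = b -> d <= 0) ->
  exists2 t, 0 < t & forall s, 0 < s -> s <= t -> a + s * d <= b.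
Proof.
move=> le_ab hd; have [d_le0|d_gt0] := lerP d 0.
  by exists 1 => // s s_gt0 _; nra.
have lt_ab : a < b by rewrite lt_neqAle le_ab andbT; apply/eqP => /hd; lra.
exists ((b - a) / d); first by rewrite divr_gt0 // subr_gt0.
by move=> s _; rewrite ler_pdivlMr //; lra.
Qed.

Lemma small_steps_uniform (T : eqType) (l : seq T) (P : T -> R -> Prop) :
  (forall a, exists2 t, 0 < t & forall s, 0 < s -> s <= t -> P a s) ->
  exists2 t, 0 < t & forall s, 0 < s -> s <= t -> forall a, a \in l -> P a s.
Proof.
move=> hP; elim: l => [|a l [t t_gt0 ht]]; first by exists 1.
have [ta ta_gt0 hta] := hP a.
exists (Num.min t ta); first by rewrite lt_min t_gt0 ta_gt0.
move=> s s_gt0; rewrite le_min => /andP[st sta] b.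
by rewrite inE => /orP[/eqP->|]; [exact: hta | exact: ht].
Qed.

End SmallSteps.

Section Vectors.
Variables (R : realType) (n : nat).
Implicit Types (a b : R) (x y z u v w c g mu nu : 'cV[R]_n).

Lemma dotC x y : dot x y = dot y x.
Proof. by apply: eq_bigr => i _; rewrite mulrC. Qed.

Lemma dotDr x y z : dot x (y + z) = dot x y + dot x z.
Proof. by rewrite /dot -big_split; apply: eq_bigr => i _; rewrite !mxE mulrDr. Qed.

Lemma dotZr a x y : dot x (a *: y) = a * dot x y.
Proof. by rewrite /dot mulr_sumr; apply: eq_bigr => i _; rewrite !mxE mulrCA. Qed.

Lemma dotNr x y : dot x (- y) = - dot x y.
Proof. by rewrite -scaleN1r dotZr mulN1r. Qed.

Lemma dotBr x y z : dot x (y - z) = dot x y - dot x z.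
Proof. by rewrite dotDr dotNr. Qed.

Lemma dotDl x y z : dot (x + y) z = dot x z + dot y z.
Proof. by rewrite dotC dotDr !(dotC z). Qed.

Lemma dotZl a x y : dot (a *: x) y = a * dot x y.
Proof. by rewrite dotC dotZr dotC. Qed.

Lemma dotBl x y z : dot (x - y) z = dot x z - dot y z.
Proof. by rewrite dotC dotBr !(dotC z). Qed.

Lemma dot_sumr (I : finType) (P : pred I) (F : I -> 'cV[R]_n) x :
  dot x (\sum_(i | P i) F i) = \sum_(i | P i) dot x (F i).
Proof.
elim/big_rec2: _ => [|i _ d _ <-]; last by rewrite dotDr.
by rewrite /dot big1 // => i _; rewrite mxE mulr0.
Qed.

Lemma sign_entryM a b : a \in [:: -1; 0; 1] -> b \in [:: -1; 0; 1] ->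
  a * b \in [:: -1; 0; 1].
Proof.
rewrite !inE => /or3P[]/eqP-> /or3P[]/eqP->;
by rewrite ?(mulN1r, mul1r, mul0r, mulr0, opprK, oppr0) ?eqxx ?orbT.
Qed.

Lemma sign_entry_sg a : Num.sg a \in [:: -1; 0; 1].
Proof. by rewrite !inE; case: sgrP; rewrite eqxx ?orbT. Qed.

Lemma sign_entry_sq a : a \in [:: -1; 0; 1] -> a * a = `|a|.
Proof.
by rewrite !inE => /or3P[]/eqP->; rewrite ?mulrNN ?mulr0 ?mulr1 ?normrN ?normr1 ?normr0.
Qed.

Lemma sign_entry_norm a : a \in [:: -1; 0; 1] -> a != 0 -> `|a| = 1.
Proof. by rewrite !inE => /or3P[]/eqP->; rewrite ?eqxx // ?normrN normr1. Qed.

Lemma sign_entry_int a : a \in [:: -1; 0; 1] -> a \is a Num.int.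
Proof. by rewrite !inE => /or3P[]/eqP->; rewrite ?rpredN ?rpred0 ?rpred1. Qed.

Lemma sign_entry_sgE a : a \in [:: -1; 0; 1] -> Num.sg a = a.
Proof. by rewrite !inE => /or3P[]/eqP->; rewrite ?sgrN ?sgr1 ?sgr0. Qed.

Definition sign_vector x : Prop := forall i, x i 0 \in [:: -1; 0; 1].

Definition norm1 x : R := \sum_i `|x i 0|.

Definition conformal u v : Prop :=
  forall i, 0 <= u i 0 * v i 0 /\ (v i 0 = 0 -> u i 0 = 0).

Lemma supp_scale a x : a != 0 -> supp (a *: x) = supp x.
Proof. by move=> a0; apply/setP => i; rewrite !inE mxE mulf_eq0 negb_or a0. Qed.

Lemma conformal_supp u v : conformal u v -> supp u \subset supp v.
Proof.
by move=> cuv; apply/subsetP => i; rewrite !inE; apply: contra_neq => /(cuv i).2.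
Qed.

Lemma sign_vector_normZ a x : sign_vector (a *: x) -> sign_vector (`|a| *: x).
Proof.
move=> sx i; have := sx i; rewrite !mxE normrEsg -mulrA.
exact: sign_entryM (sign_entry_sg a).
Qed.

Lemma dot_sign_vector x : sign_vector x -> dot x x = norm1 x.
Proof. by move=> sx; apply: eq_bigr => i _; rewrite sign_entry_sq. Qed.

Lemma norm1_ge0 x : 0 <= norm1 x.
Proof. exact: sumr_ge0. Qed.

Lemma norm1_le_dot x : (forall i, x i 0 \is a Num.int) -> norm1 x <= dot x x.
Proof.
move=> xZ; apply: ler_sum => i _; have [->|xi0] := eqVneq (x i 0) 0.
  by rewrite normr0 mulr0.
have -> : x i 0 * x i 0 = `|x i 0| * `|x i 0|.
  by rewrite -normrM ger0_norm // -expr2 sqr_ge0.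
by rewrite ler_peMl ?norm_intr_ge1.
Qed.

Lemma norm1_ge1 x : (forall i, x i 0 \is a Num.int) -> x != 0 -> 1 <= norm1 x.
Proof.
move=> xZ /cV0Pn[i xi0]; rewrite /norm1 (bigD1 i) //=.
by rewrite -[1]addr0 lerD ?norm_intr_ge1 ?sumr_ge0.
Qed.

Lemma conformal_refl u : conformal u u.
Proof. by move=> i; rewrite -expr2 sqr_ge0. Qed.

Lemma conformal_trans u v w : conformal u v -> conformal v w -> conformal u w.
Proof.
move=> cuv cvw i; have [uv0 uv] := cuv i; have [vw0 vw] := cvw i.
split; last by move=> /vw /uv.
by have [v_gt0|v_lt0|/uv->] := ltrgt0P (v i 0); rewrite ?mul0r //; nra.
Qed.

Lemma conformalZ a x : 0 < a -> conformal (a *: x) x.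
Proof.
move=> a_gt0 i; rewrite mxE; split; last by move=> ->; rewrite mulr0.
by rewrite -mulrA -expr2; apply: mulr_ge0; [exact: ltW | exact: sqr_ge0].
Qed.

Lemma conformal_sign_eq g c i : sign_vector g -> sign_vector c ->
  conformal g c -> g i 0 != 0 -> g i 0 = c i 0.
Proof.
move=> sg sc /(_ i)[gc0 gc] gi0; have := sg i; have := sc i.
rewrite !inE => /or3P[]/eqP ci /or3P[]/eqP gi; move: gc0 gi0 gc;
by rewrite ci gi ?eqxx //; lra.
Qed.

Lemma norm1_conformal_sub g mu : sign_vector g -> conformal g mu ->
  (forall i, mu i 0 \is a Num.int) -> norm1 mu = norm1 g + norm1 (mu - g).
Proof.
move=> sg cg muZ; rewrite /norm1 -big_split; apply: eq_bigr => i _ /=.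
have [gmu_ge0 gmu] := cg i; rewrite !mxE.
have [gi0|gi0] := eqVneq (g i 0) 0; first by rewrite gi0 normr0 subr0 add0r.
have mui0 : mu i 0 != 0 by apply: contra_neq gi0 => /gmu.
have := norm_intr_ge1 (muZ i) mui0; rewrite (sign_entry_norm (sg i) gi0).
move: (sg i) gmu_ge0 gi0; rewrite !inE => /or3P[]/eqP-> //; rewrite ?eqxx //.
- move=> le0 _ ge1; have mu_lt0 : mu i 0 < 0 by rewrite lt_neqAle mui0 /=; lra.
  by rewrite ltr0_norm // in ge1 *; rewrite ler0_norm; lra.
- move=> ge0 _ ge1; have mu_gt0 : 0 < mu i 0 by rewrite lt_def mui0 /=; lra.
  by rewrite gtr0_norm // in ge1 *; rewrite ger0_norm; lra.
Qed.

Lemma sign_vectors_finite : exists l : seq 'cV[R]_n, forall c, sign_vector c -> c \in l.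
Proof.
exists (codom (fun s : {ffun 'I_n -> 'I_3} => \col_i nth 0 [:: -1; 0; 1] (s i))).
move=> c sc.
pose s : {ffun 'I_n -> 'I_3} := [ffun i => inord (index (c i 0) [:: -1; 0; 1])].
suff -> : c = \col_i nth 0 [:: -1; 0; 1] (s i) by exact: codom_f.
by apply/matrixP => i k; rewrite (ord1 k) !mxE ffunE inordK ?index_mem ?nth_index.
Qed.

Definition signed_by w mu : Prop := forall i, w i 0 * mu i 0 = `|mu i 0|.

Lemma dot_signed_by w mu : signed_by w mu -> dot w mu = norm1 mu.
Proof. by move=> dmu; apply: eq_bigr => i _; rewrite dmu. Qed.

Lemma signed_byD w mu nu : (forall i, `|w i 0| <= 1) ->
  signed_by w mu -> signed_by w nu -> signed_by w (mu + nu).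
Proof.
move=> w_le1 dmu dnu i; rewrite mxE.
have : `|mu i 0 + nu i 0| <= `|mu i 0| + `|nu i 0| by exact: ler_normD.
have : w i 0 * (mu i 0 + nu i 0) <= `|mu i 0 + nu i 0|.
  by apply: le_trans (ler_norm _) _; rewrite normrM ler_piMl.
by rewrite mulrDr dmu dnu; lra.
Qed.

Lemma signed_by_subr w mu c : signed_by w mu -> sign_vector c ->
  (forall i, c i 0 != 0 -> w i 0 = c i 0 /\ 1 <= `|mu i 0|) ->
  signed_by w (mu - c).
Proof.
move=> dmu sc hc i; rewrite !mxE.
have [->|ci0] := eqVneq (c i 0) 0; first by rewrite subr0 dmu.
have [wc mu_ge1] := hc i ci0.
have w_norm1 : `|w i 0| = 1 by rewrite wc sign_entry_norm.
have : 0 <= w i 0 * (mu i 0 - c i 0).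
  by rewrite mulrBr dmu wc (sign_entry_sq (sc i)) (sign_entry_norm (sc i) ci0) subr_ge0.
by move=> /ger0_norm <-; rewrite normrM w_norm1 mul1r.
Qed.

End Vectors.

Section Flows.
Variables (R : realType) (m n : nat) (M : 'M[R]_(m, n)).
Implicit Types (a : R) (x y z c mu : 'cV[R]_n).

Lemma inF0 : inF M 0.
Proof. by rewrite /inF mulmx0. Qed.

Lemma inFD x y : inF M x -> inF M y -> inF M (x + y).
Proof. by rewrite /inF mulmxDr => -> ->; rewrite addr0. Qed.

Lemma inFB x y : inF M x -> inF M y -> inF M (x - y).
Proof. by rewrite /inF mulmxBr => -> ->; rewrite subrr. Qed.

Lemma inFZ a x : inF M x -> inF M (a *: x).
Proof. by rewrite /inF -scalemxAr => ->; rewrite scaler0. Qed.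

Lemma inLambda0 : inLambda M 0.
Proof. by split=> [|i]; [exact: inF0 | rewrite mxE rpred0]. Qed.

Lemma inLambdaD x y : inLambda M x -> inLambda M y -> inLambda M (x + y).
Proof. by move=> [Fx Zx] [Fy Zy]; split=> [|i]; [exact: inFD | rewrite mxE rpredD]. Qed.

Lemma inLambdaB x y : inLambda M x -> inLambda M y -> inLambda M (x - y).
Proof. by move=> [Fx Zx] [Fy Zy]; split=> [|i]; [exact: inFB | rewrite !mxE rpredB]. Qed.

Definition sign_flow c : Prop := inF M c /\ sign_vector c.

Lemma sign_flow_lattice c : sign_flow c -> inLambda M c.
Proof. by move=> [Fc sc]; split=> // i; exact: sign_entry_int. Qed.

Lemma Xi_sign_flow g : Xi M g -> sign_flow g.
Proof. by move=> [[Fg _] [sg _]]. Qed.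

Lemma Xi_neq0 g : Xi M g -> g != 0.
Proof.
move=> [_ [_ [[x [x0 [_ sx]]] _]]]; have /cV0Pn[i xi0] := x0.
by apply/cV0Pn; exists i; have := subsetP sx i; rewrite !inE; exact.
Qed.

Lemma V0E x :
  V0 M x <-> inF M x /\ forall mu, inLambda M mu -> 2 * dot x mu <= dot mu mu.
Proof.
have sqB mu : dot (x - mu) (x - mu) = dot x x - 2 * dot x mu + dot mu mu.
  by rewrite dotBl !dotBr (dotC mu x); ring.
by split=> -[Fx hx]; split=> // mu /hx; rewrite sqB; lra.
Qed.

Lemma V0_sign_flow x c : V0 M x -> sign_flow c -> 2 * dot x c <= dot c c.
Proof. by move=> /V0E[_ hx] /sign_flow_lattice; exact: hx. Qed.

Lemma V0_midpoint x1 x2 : V0 M x1 -> V0 M x2 -> V0 M (2^-1 *: (x1 + x2)).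
Proof.
move=> /V0E[F1 h1] /V0E[F2 h2]; apply/V0E; split; first by apply/inFZ/inFD.
by move=> mu Lmu; have := h1 _ Lmu; have := h2 _ Lmu; rewrite dotZl dotDl; lra.
Qed.

Lemma V0_midpoint_tight x1 x2 mu : V0 M x1 -> V0 M x2 -> inLambda M mu ->
  2 * dot (2^-1 *: (x1 + x2)) mu = dot mu mu ->
  2 * dot x1 mu = dot mu mu /\ 2 * dot x2 mu = dot mu mu.
Proof.
move=> /V0E[_ h1] /V0E[_ h2] Lmu; have := h1 _ Lmu; have := h2 _ Lmu.
by rewrite dotZl dotDl; lra.
Qed.

(* The ratio test of the simplex method: walk from y against z until the
   first coordinate of y vanishes. *)
Lemma conformal_shift y z e0 : supp z \subset supp y -> 0 < z e0 0 * y e0 0 ->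
  exists t, conformal (y - t *: z) y /\ exists2 e, y e 0 != 0 & (y - t *: z) e 0 = 0.
Proof.
move=> szy zy_gt0; pose P e := 0 < z e 0 * y e 0.
case: (@arg_minP _ _ _ e0 P (fun e => y e 0 / z e 0) zy_gt0) => es.
rewrite {}/P => Pes min_es.
have zes0 : z es 0 != 0 by apply: contraTneq Pes => ->; rewrite mul0r ltxx.
have yes0 : y es 0 != 0 by apply: contraTneq Pes => ->; rewrite mulr0 ltxx.
set t := y es 0 / z es 0 in min_es *; exists t; split; last first.
  by exists es; rewrite // !mxE /t mulfVK // subrr.
have t_ge0 : 0 <= t.
  have -> : t = (z es 0 * y es 0) / (z es 0 ^+ 2) by rewrite /t; field.
  by rewrite divr_ge0 ?sqr_ge0 ?ltW.
move=> i; rewrite !mxE; split; last first.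
  move=> yi0; have : i \notin supp z.
    by apply/negP => /(subsetP szy); rewrite inE yi0 eqxx.
  by rewrite !inE negbK => /eqP->; rewrite yi0 mulr0 subr0.
suff : t * (z i 0 * y i 0) <= y i 0 * y i 0 by lra.
have [Pi|] := boolP (0 < z i 0 * y i 0); last by rewrite -leNgt => zy_le0; nra.
have zi0 : z i 0 != 0 by apply: contraTneq Pi => ->; rewrite mul0r ltxx.
have -> : y i 0 * y i 0 = y i 0 / z i 0 * (z i 0 * y i 0) by field.
by apply: ler_wpM2r; [exact: ltW | exact: min_es].
Qed.

Lemma conformal_flow_smaller y : inF M y -> y != 0 -> ~ matroid_circuit M (supp y) ->
  exists y', [/\ inF M y', y' != 0, conformal y' y & (#|supp y'| < #|supp y|)%N].
Proof.
move=> Fy y0 ncirc.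
have [T ltTy [z [z0 [Fz szT]]]] :
    exists2 T : {set 'I_n}, T \proper supp y & dependent M T.
  apply: contrapT => noT; apply: ncirc; split; first by exists y.
  by move=> T ltTy depT; apply: noT; exists T.
have /cV0Pn[e0 ze0] := z0.
have szy : supp z \subset supp y := subset_trans szT (proper_sub ltTy).
have ye0 : y e0 0 != 0 by have := subsetP szy e0; rewrite !inE; exact.
pose s := Num.sg (z e0 0 * y e0 0).
have s0 : s != 0 by rewrite sgr_eq0 mulf_neq0.
have sz_gt0 : 0 < (s *: z) e0 0 * y e0 0.
  by rewrite mxE -mulrA -normrEsg normr_gt0 mulf_neq0.
have [|t [cy [es yes0 yt_es]]] := conformal_shift _ sz_gt0; first by rewrite supp_scale.
have [_ [e ey eT]] := properP ltTy.
have ze : z e 0 = 0.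
  by apply/eqP; apply: contraNT eT => zeP; apply: (subsetP szT); rewrite inE.
exists (y - t *: (s *: z)); split.
- by apply/inFB/inFZ/inFZ.
- by apply/cV0Pn; exists e; rewrite !mxE ze !mulr0 subr0; rewrite inE in ey.
- exact: cy.
- apply: proper_card; apply/properP; split; first exact: conformal_supp.
  by exists es; rewrite !inE ?yt_es ?eqxx.
Qed.

Lemma conformal_circuit_flow y : inF M y -> y != 0 ->
  exists z, [/\ inF M z, conformal z y & matroid_circuit M (supp z)].
Proof.
have [k] := ubnP #|supp y|; elim: k y => // k IH y lt_yk Fy y0.
have [circ|ncirc] := pselect (matroid_circuit M (supp y)).
  by exists y; split=> //; exact: conformal_refl.
have [y' [Fy' y'0 cy' lt_y']] := conformal_flow_smaller Fy y0 ncirc.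
have [|z [Fz czy' circ]] := IH y' _ Fy' y'0; first exact: leq_trans lt_y' _.
by exists z; split=> //; exact: conformal_trans cy'.
Qed.

End Flows.

Lemma row_full_ker0 (F : fieldType) p q (A : 'M[F]_(p, q)) :
  (forall v : 'cV_q, A *m v = 0 -> v = 0) -> row_full A.
Proof.
move=> Ainj; rewrite /row_full -mxrank_tr; apply: (@inj_row_free _ _ _ A^T) => v.
move=> /(congr1 trmx); rewrite trmx_mul trmxK trmx0 => /Ainj /(congr1 trmx).
by rewrite trmxK trmx0.
Qed.

Section Columns.
Variables (R : realType) (m n : nat) (M : 'M[R]_(m, n)).

Lemma colsub_ker0 (S : {set 'I_n}) k (g : 'I_k -> 'I_n) (v : 'cV[R]_k) :
  ~ dependent M S -> injective g -> (forall j, g j \in S) ->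
  colsub g M *m v = 0 -> v = 0.
Proof.
move=> indepS g_inj gS Av; apply/eqP; apply: contrapT => /negP v0; apply: indepS.
have entry e : (colsub g 1%:M *m v) e 0 = \sum_(j | g j == e) v j 0.
  rewrite mxE [RHS]big_mkcond /=; apply: eq_bigr => j _.
  by rewrite !mxE mulr_natl mulrb eq_sym.
exists (colsub g 1%:M *m v); split; [|split].
- have /cV0Pn[j vj0] := v0; apply/cV0Pn; exists (g j).
  by rewrite entry (eq_bigl (pred1 j)) ?big_pred1_eq // => i; rewrite inj_eq.
- by rewrite /inF mulmxA mulmx_colsub mulmx1.
- apply/subsetP => e; rewrite inE; apply: contraR => eS.
  by rewrite entry big_pred0 // => j; apply: contraNF eS => /eqP <-.
Qed.

Lemma colsub_enum_mul (S : {set 'I_n}) x : supp x \subset S ->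
  colsub (fun j : 'I_#|S| => enum_val j) M *m \col_j x (enum_val j) 0 = M *m x.
Proof.
move=> sxS; apply/matrixP => r k; rewrite (ord1 k) !mxE (bigID (mem S)) /=.
rewrite [X in _ = _ + X]big1 ?addr0 => [|e eS]; last first.
  have : e \notin supp x by apply: contra eS; exact: (subsetP sxS).
  by rewrite inE negbK => /eqP->; rewrite mulr0.
by rewrite [RHS]big_enum_val /=; apply: eq_bigr => j _; rewrite !mxE.
Qed.

Lemma flow_colsub_mul y e0 : inF M y ->
  let g (j : 'I_#|supp y :\ e0|) : 'I_n := enum_val j in
  colsub g M *m \col_j y (g j) 0 = - y e0 0 *: col e0 M.
Proof.
move=> Fy g; pose y' := y - y e0 0 *: delta_mx e0 0.
have y'E e : e != e0 -> y' e 0 = y e 0.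
  by move=> ne; rewrite !mxE (negbTE ne) mulr0 subr0.
have -> : \col_j y (g j) 0 = \col_j y' (g j) 0.
  apply/matrixP => j k; rewrite [LHS]mxE [RHS]mxE y'E //.
  by have := enum_valP j; rewrite !inE => /andP[].
rewrite colsub_enum_mul; last first.
  apply/subsetP => e; rewrite !inE; have [->|ne] := eqVneq e e0.
    by rewrite !mxE !eqxx mulr1 subrr eqxx.
  by rewrite y'E.
by rewrite mulmxBr Fy sub0r -scalemxAr -colE scaleNr.
Qed.

End Columns.

Section Unimodular.
Variables (R : realType) (m n : nat) (M : 'M[R]_(m, n)).
Hypothesis HTU : totally_unimodular M.
Implicit Types (x y z c g mu nu : 'cV[R]_n).

(* Cramer's rule: det B * u_j is again a maximal minor of M. *)
Lemma tu_cramer_sign k (f : 'I_k -> 'I_m) (g : 'I_k -> 'I_n) e0 (u : 'cV[R]_k) :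
  \det (mxsub f g M) != 0 -> mxsub f g M *m u = \col_i M (f i) e0 ->
  sign_vector u.
Proof.
set B := mxsub f g M => detB0 Bu j.
pose g' l := if l == j then e0 else g l.
have cramer : \det B * u j 0 = \det (mxsub f g' M).
  have := congr1 (mulmx (\adj B)) Bu; rewrite mulmxA mul_adj_mx mul_scalar_mx.
  move=> /matrixP /(_ j 0); rewrite !mxE => ->.
  rewrite (expand_det_col _ j); apply: eq_bigr => i _.
  rewrite !mxE /g' eqxx mulrC; congr (_ * _); rewrite /cofactor; congr (_ * \det _).
  apply/matrixP => r s; rewrite !mxE.
  by have /negbTE -> : lift j s != j by rewrite eq_sym neq_lift.
have detB2 : \det B * \det B = 1.
  by rewrite sign_entry_sq ?sign_entry_norm ?HTU.
have -> : u j 0 = \det B * (\det B * u j 0) by rewrite mulrA detB2 mul1r.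
by rewrite cramer; apply: sign_entryM; apply: HTU.
Qed.

Lemma circuit_scale_sign y : inF M y -> matroid_circuit M (supp y) ->
  exists2 c : R, 0 < c & sign_vector (c *: y).
Proof.
move=> Fy [[x [x0 [_ sx]]] minT].
have [e0 ye0] : exists e0, e0 \in supp y.
  by have /cV0Pn[e xe] := x0; exists e; apply: (subsetP sx); rewrite inE.
have ye00 : y e0 0 != 0 by rewrite inE in ye0.
set T0 := supp y :\ e0; pose g (j : 'I_#|T0|) : 'I_n := enum_val j.
have indep : ~ dependent M T0 by apply: minT; exact: properD1.
have rfA : row_full (colsub g M).
  apply: row_full_ker0 => v; apply: colsub_ker0 indep _ _; first exact: enum_val_inj.
  exact: enum_valP.
pose f := fullrankfun rfA; pose d := - (y e0 0)^-1.
have detB0 : \det (mxsub f g M) != 0.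
  by rewrite -unitfE -unitmxE mxsubrc fullrowsub_unit.
have su : sign_vector (d *: \col_j y (g j) 0).
  apply: (tu_cramer_sign detB0 (e0 := e0)).
  rewrite mxsubrc mul_rowsub_mx -scalemxAr flow_colsub_mul // scalerA.
  rewrite /d mulrNN mulVf // scale1r; apply/matrixP => i k.
  by rewrite (ord1 k) !mxE.
exists `|d|; first by rewrite normr_gt0 oppr_eq0 invr_eq0.
apply: sign_vector_normZ => e; rewrite mxE.
have [->|ne] := eqVneq e e0; first by rewrite /d mulNr mulVf // !inE eqxx.
have [eT0|eT0] := boolP (e \in T0).
  have := su (enum_rank_in eT0 e); rewrite !mxE.
  by rewrite /g enum_rankK_in.
have -> : y e 0 = 0 by apply/eqP; move: eT0; rewrite !inE ne negbK.
by rewrite mulr0 !inE eqxx orbT.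
Qed.

Lemma circuit_conformal mu : inF M mu -> mu != 0 -> exists2 g, Xi M g & conformal g mu.
Proof.
move=> Fmu mu0; have [y [Fy cy circ]] := conformal_circuit_flow Fmu mu0.
have [c c_gt0 sc] := circuit_scale_sign Fy circ.
exists (c *: y); last exact: conformal_trans (conformalZ _ c_gt0) cy.
split; first exact: sign_flow_lattice (conj (inFZ c Fy) sc).
by split; last rewrite supp_scale ?gt_eqF.
Qed.

Lemma dot_le_norm1 x : (forall c, sign_flow M c -> 2 * dot x c <= dot c c) ->
  forall mu, inLambda M mu -> 2 * dot x mu <= norm1 mu.
Proof.
move=> hx mu Lmu; have [N ltN] : exists N : nat, norm1 mu < N%:R.
  by exists (Num.bound (norm1 mu)); apply/archi_boundP/norm1_ge0.
elim: N mu Lmu ltN => [|N IH] mu [Fmu Zmu] ltN; first by have := norm1_ge0 mu; lra.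
have [->|mu0] := eqVneq mu 0.
  by rewrite /dot big1 ?mulr0 ?norm1_ge0 // => i _; rewrite mxE mulr0.
have [g Xg cg] := circuit_conformal Fmu mu0.
have [Fg sg] := Xi_sign_flow Xg; have Lg := sign_flow_lattice (conj Fg sg).
have mu_split := norm1_conformal_sub sg cg Zmu.
have g_ge1 := norm1_ge1 Lg.2 (Xi_neq0 Xg).
have := hx g (conj Fg sg); rewrite dot_sign_vector // => tg.
have /IH : norm1 (mu - g) < N%:R by rewrite -natr1 in ltN; lra.
move=> /(_ (inLambdaB (conj Fmu Zmu) Lg)); rewrite dotBr; lra.
Qed.

Lemma V0_norm1 x mu : V0 M x -> inLambda M mu -> 2 * dot x mu <= norm1 mu.
Proof. by move=> Vx; apply: dot_le_norm1 => c; exact: V0_sign_flow. Qed.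

Lemma sign_flows_V0 x :
  inF M x -> (forall c, sign_flow M c -> 2 * dot x c <= dot c c) -> V0 M x.
Proof.
move=> Fx hx; apply/V0E; split=> // mu Lmu.
exact: le_trans (dot_le_norm1 hx Lmu) (norm1_le_dot Lmu.2).
Qed.

Lemma tight_split x mu nu : V0 M x -> inLambda M mu -> inLambda M nu ->
  2 * dot x (mu + nu) = norm1 mu + norm1 nu ->
  2 * dot x mu = norm1 mu /\ 2 * dot x nu = norm1 nu.
Proof.
move=> Vx Lmu Lnu; have := V0_norm1 Vx Lmu; have := V0_norm1 Vx Lnu.
by rewrite dotDr; lra.
Qed.

Lemma tight_sign_agree x g g' e : V0 M x -> sign_flow M g -> sign_flow M g' ->
  2 * dot x g = dot g g -> 2 * dot x g' = dot g' g' ->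
  g e 0 != 0 -> g' e 0 != 0 -> g e 0 = g' e 0.
Proof.
move=> Vx sfg sfg' tg tg' ge0 g'e0; apply/eqP/contraT => neq.
have opp : g e 0 + g' e 0 = 0.
  move: (sfg.2 e) (sfg'.2 e) ge0 g'e0 neq; rewrite !inE.
  by move=> /or3P[]/eqP-> /or3P[]/eqP->; rewrite ?eqxx // => *; lra.
have : norm1 (g + g') < norm1 g + norm1 g'.
  rewrite /norm1 -big_split (bigD1 e) //= [X in _ < X](bigD1 e) //=.
  apply: ltr_leD; last by apply: ler_sum => i _; rewrite mxE ler_normD.
  by rewrite mxE opp normr0 ltr_wpDr ?normr_gt0.
have := V0_norm1 Vx (inLambdaD (sign_flow_lattice sfg) (sign_flow_lattice sfg')).
by rewrite dotDr mulrDr tg tg' (dot_sign_vector sfg.2) (dot_sign_vector sfg'.2); lra.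
Qed.

End Unimodular.

Section Faces.
Variables (R : realType) (m n : nat) (M : 'M[R]_(m, n)).
Implicit Types (x y c mu : 'cV[R]_n) (F : 'cV[R]_n -> Prop).

Definition tight_on F mu : Prop := forall x, F x -> 2 * dot x mu = dot mu mu.

Lemma face_V0 F x : nonempty_face M F -> F x -> V0 M x.
Proof. by move=> [_ [a [b [_ FE]]]] /FE[]. Qed.

Lemma face_midpoint F x1 x2 :
  nonempty_face M F -> F x1 -> F x2 -> F (2^-1 *: (x1 + x2)).
Proof.
move=> [_ [a [b [_ FE]]]] /FE[V1 a1] /FE[V2 a2]; apply/FE.
by split; [exact: V0_midpoint | rewrite dotZr dotDr a1 a2; lra].
Qed.

Lemma face_extend F x0 y t : nonempty_face M F -> F x0 -> V0 M y -> 0 < t ->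
  V0 M (x0 + t *: (x0 - y)) -> F y.
Proof.
move=> [_ [a [b [ab FE]]]] /FE[_ ax0] Vy t_gt0 /ab.
rewrite dotDr dotZr dotBr ax0 => az; apply/FE; split=> //.
by have := ab _ Vy; nra.
Qed.

Lemma face_relint_point F (l : seq 'cV[R]_n) : nonempty_face M F ->
  exists2 x0, F x0 & forall mu, mu \in l -> inLambda M mu ->
    2 * dot x0 mu = dot mu mu -> tight_on F mu.
Proof.
move=> fF; elim: l => [|mu l [x0 Fx0 hx0]]; first by have [[x Fx] _] := fF; exists x.
have [[x1 [Fx1 x1mu]]|tight_mu] :=
  pselect (exists x1, F x1 /\ 2 * dot x1 mu != dot mu mu).
  exists (2^-1 *: (x0 + x1)); first exact: face_midpoint.
  have mid_tight := V0_midpoint_tight (face_V0 fF Fx0) (face_V0 fF Fx1).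
  move=> nu; rewrite inE => /orP[/eqP-> | nul] Lnu /(mid_tight _ Lnu)[t0 t1].
    by rewrite t1 eqxx in x1mu.
  exact: hx0.
exists x0 => // nu; rewrite inE => /orP[/eqP-> _ _ | /hx0 //].
by move=> x Fx; apply/eqP/contraT => ne; case: tight_mu; exists x.
Qed.

End Faces.

Section Phi.
Variables (R : realType) (m n : nat) (M : 'M[R]_(m, n)).
Hypothesis HTU : totally_unimodular M.
Implicit Types (x y c g mu : 'cV[R]_n) (F : 'cV[R]_n -> Prop).

Definition phi_witness F e : 'cV[R]_n :=
  epsilon (inhabits 0) (fun g => U M F g /\ e \in supp g).

Lemma phi_witnessP F e :
  e \in phiS M F -> U M F (phi_witness F e) /\ e \in supp (phi_witness F e).
Proof. by rewrite inE => /asboolP; exact: epsilon_spec. Qed.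

Definition conforms_to_phi F c : Prop :=
  forall e, c e 0 != 0 -> e \in phiS M F /\ phiEps M F e = c e 0.

Lemma U_conforms_to_phi F g : nonempty_face M F -> U M F g -> conforms_to_phi F g.
Proof.
move=> fF Ug e ge0; have eS : e \in phiS M F.
  by rewrite inE; apply/asboolP; exists g; rewrite inE.
split=> //; have [Uw ew] := phi_witnessP eS; rewrite inE in ew.
rewrite /phiEps -/(phi_witness F e); have [[x Fx] _] := fF.
have [_ tw] := Uw.2 x Fx; have [_ tg] := Ug.2 x Fx.
have Vx := face_V0 fF Fx.
rewrite (tight_sign_agree HTU Vx (Xi_sign_flow Uw.1) (Xi_sign_flow Ug.1) tw tg ew ge0).
exact/sign_entry_sgE/(Ug.1.2.1 e).
Qed.

Lemma phi_mono F1 F2 : nonempty_face M F1 -> nonempty_face M F2 ->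
  (forall x, F1 x -> F2 x) -> osm_le (phi M F1) (phi M F2).
Proof.
move=> f1 f2 sub; have U21 g : U M F2 g -> U M F1 g.
  by move=> [Xg hg]; split=> // x /sub /hg.
split=> [|e /= eS].
  apply/subsetP => e; rewrite !inE => /asboolP[g [Ug eg]].
  by apply/asboolP; exists g; split=> //; exact: U21.
have [Uw ew] := phi_witnessP eS; rewrite inE in ew.
by rewrite (U_conforms_to_phi f2 Uw ew).2 (U_conforms_to_phi f1 (U21 _ Uw) ew).2.
Qed.

Lemma tight_conforms_to_phi F c : nonempty_face M F -> sign_flow M c ->
  tight_on F c -> conforms_to_phi F c.
Proof.
move=> fF; have [k] := ubnP #|supp c|; elim: k c => // k IH c lt_ck [Fc sc] tc e ce0.
have c0 : c != 0 by apply/cV0Pn; exists e.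
have [g Xg cg] := circuit_conformal HTU Fc c0.
have [Fg sg] := Xi_sign_flow Xg.
have Lc := sign_flow_lattice (conj Fc sc); have Lg := sign_flow_lattice (conj Fg sg).
have tight_parts x : F x ->
    2 * dot x g = norm1 g /\ 2 * dot x (c - g) = norm1 (c - g).
  move=> Fx; apply: (tight_split HTU (face_V0 fF Fx) Lg (inLambdaB Lc Lg)).
  by rewrite addrC subrK -(norm1_conformal_sub sg cg Lc.2) -dot_sign_vector // tc.
have cgE i : (c - g) i 0 = if g i 0 == 0 then c i 0 else 0.
  rewrite !mxE; have [->|gi0] := eqVneq (g i 0) 0; first by rewrite subr0.
  by rewrite (conformal_sign_eq sg sc cg gi0) subrr.
have [ge0|ge0] := eqVneq (g e 0) 0; last first.
  rewrite -(conformal_sign_eq sg sc cg ge0); apply: U_conforms_to_phi => //.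
  split=> // x Fx; split; first by case: (face_V0 fF Fx).
  by rewrite dot_sign_vector //; case: (tight_parts x Fx).
have lt_supp : supp (c - g) \proper supp c.
  apply/properP; split.
    by apply/subsetP => i; rewrite !inE cgE; case: ifP => _ //; rewrite eqxx.
  have /cV0Pn[i gi0] := Xi_neq0 Xg.
  exists i; last by rewrite inE cgE (negbTE gi0) eqxx.
  by rewrite inE -(conformal_sign_eq sg sc cg gi0).
have scg : sign_vector (c - g).
  by move=> i; rewrite cgE; case: ifP => _; rewrite ?sc // !inE eqxx orbT.
have tcg : tight_on F (c - g).
  by move=> x Fx; rewrite dot_sign_vector //; case: (tight_parts x Fx).
have lt_cgk := leq_trans (proper_card lt_supp) (ltnSE lt_ck).
have := IH (c - g) lt_cgk (conj (inFB Fc Fg) scg) tcg e.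
by rewrite cgE ge0 eqxx; exact.
Qed.

Definition phi_sign F : 'cV[R]_n :=
  \col_i (if i \in phiS M F then phiEps M F i else 0).

Lemma phi_sign_norm F i : `|phi_sign F i 0| <= 1.
Proof.
rewrite mxE; case: ifP => _; last by rewrite normr0 ler01.
by rewrite /phiEps normr_sg; case: (_ != 0); rewrite ?ler01 ?lexx.
Qed.

Lemma conforms_signed_by F c :
  sign_vector c -> conforms_to_phi F c -> signed_by (phi_sign F) c.
Proof.
move=> sc cc i; have [->|ci0] := eqVneq (c i 0) 0; first by rewrite mulr0 normr0.
by have [iS phi_i] := cc i ci0; rewrite mxE iS phi_i sign_entry_sq.
Qed.

(* The sum P of the witness circuits of phi(F) is tight on F and signed by
   phi(F), with |P_i| >= 1 wherever c_i != 0; so P - c is signed by phi(F)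
   as well, and splitting P = c + (P - c) makes c tight. *)
Lemma conforms_to_phi_tight F c : nonempty_face M F -> sign_flow M c ->
  conforms_to_phi F c -> tight_on F c.
Proof.
move=> fF [Fc sc] cc x Fx; have Vx := face_V0 fF Fx.
pose w := phi_sign F; pose P := \sum_(e in phiS M F) phi_witness F e.
have Uw e : e \in phiS M F -> U M F (phi_witness F e).
  by move=> /phi_witnessP[].
have dw e : e \in phiS M F -> signed_by w (phi_witness F e).
  move=> /Uw Ue; apply: conforms_signed_by; [exact: Ue.1.2.1 | exact: U_conforms_to_phi].
have dP : signed_by w P.
  apply: (big_ind (signed_by w)) => [i|mu nu|//]; first by rewrite !mxE mulr0 normr0.
  exact: signed_byD (phi_sign_norm F).
have LP : inLambda M P.
  by apply: big_ind => [|mu nu|e /Uw[[]]]; [exact: inLambda0 | exact: inLambdaD |].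
have tP : 2 * dot x P = dot w P.
  rewrite !dot_sumr mulr_sumr; apply: eq_bigr => e eS.
  have [[_ [sg _]] tg] := Uw e eS; have [_ ->] := tg x Fx.
  by rewrite dot_sign_vector // dot_signed_by //; exact: dw.
have dPc : signed_by w (P - c).
  apply: signed_by_subr => // i ci0.
  have [iS phi_i] := cc i ci0; split; first by rewrite mxE iS phi_i.
  have [Ui ii] := phi_witnessP iS; rewrite inE in ii.
  rewrite -dP summxE mulr_sumr (bigD1 i) //= dw // sign_entry_norm ?lerDl ?sumr_ge0 //.
    by move=> e /andP[eS _]; rewrite dw.
  exact: Ui.1.2.1.
have Lc := sign_flow_lattice (conj Fc sc).
have [|tc _] := tight_split HTU Vx Lc (inLambdaB LP Lc).
  rewrite addrC subrK tP -[in LHS](subrK c P) dotDr addrC.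
  by rewrite (dot_signed_by (conforms_signed_by sc cc)) (dot_signed_by dPc).
by rewrite tc dot_sign_vector.
Qed.

Lemma phi_eq_tight_on F1 F2 c : nonempty_face M F1 -> nonempty_face M F2 ->
  osm_eq (phi M F1) (phi M F2) -> sign_flow M c -> tight_on F2 c -> tight_on F1 c.
Proof.
move=> f1 f2 [/= eS eE] sfc /(tight_conforms_to_phi f2 sfc) cc.
apply: conforms_to_phi_tight f1 sfc _ => e /cc[eS2 <-].
by split; [rewrite eS | rewrite eE ?eS].
Qed.

Lemma V0_extend x0 y : V0 M x0 -> V0 M y ->
  (forall c, sign_flow M c -> 2 * dot x0 c = dot c c -> 2 * dot y c = dot c c) ->
  exists2 t, 0 < t & V0 M (x0 + t *: (x0 - y)).
Proof.
move=> Vx0 Vy tight_xy; have [l hl] := sign_vectors_finite R n.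
pose P c s := sign_flow M c -> 2 * dot (x0 + s *: (x0 - y)) c <= dot c c.
have [c|t t_gt0 ht] := @small_steps_uniform _ _ l P.
  have [sfc|nsfc] := pselect (sign_flow M c); last by exists 1 => // s _ _ /nsfc.
  pose d := 2 * dot x0 c - 2 * dot y c.
  have [|t t_gt0 ht] := small_step_le (d := d) (V0_sign_flow Vx0 sfc).
    by move=> tx0; have := tight_xy c sfc tx0; rewrite /d; lra.
  exists t => // s s_gt0 s_le _; have := ht s s_gt0 s_le.
  by rewrite /d dotDl dotZl dotBl; lra.
exists t => //; apply: (sign_flows_V0 HTU) => [|c sfc]; last exact: ht (hl _ sfc.2) sfc.
by apply: inFD Vx0.1 (inFZ _ (inFB Vx0.1 Vy.1)).
Qed.

Lemma phi_eq_face_sub F1 F2 : nonempty_face M F1 -> nonempty_face M F2 ->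
  osm_eq (phi M F1) (phi M F2) -> forall y, F1 y -> F2 y.
Proof.
move=> f1 f2 e12 y F1y; have Vy := face_V0 f1 F1y.
have [l hl] := sign_vectors_finite R n.
have [x0 F2x0 relint] := face_relint_point l f2.
have [|t t_gt0 Vz] := V0_extend (face_V0 f2 F2x0) Vy.
  move=> c sfc tx0; apply: (phi_eq_tight_on f1 f2 e12 sfc _ F1y).
  exact: relint (hl _ sfc.2) (sign_flow_lattice sfc) tx0.
exact: face_extend f2 F2x0 Vy t_gt0 Vz.
Qed.

End Phi.

Lemma osm_eq_sym (R : realType) n (p q : osm R n) : osm_eq p q -> osm_eq q p.
Proof. by move=> [pq E]; split=> // e; rewrite -pq => ep; rewrite E. Qed.

Theorem mainTheorem14 (R : realType) (m n : nat) (M : 'M[R]_(m, n))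
  (HTU : totally_unimodular M) :
  (forall F1 F2 : 'cV[R]_n -> Prop,
     nonempty_face M F1 -> nonempty_face M F2 ->
     osm_eq (phi M F1) (phi M F2) -> forall x, F1 x <-> F2 x) /\
  (forall F1 F2 : 'cV[R]_n -> Prop,
     nonempty_face M F1 -> nonempty_face M F2 ->
     (forall x, F1 x -> F2 x) -> osm_le (phi M F1) (phi M F2)).
Proof.
split=> [F1 F2 f1 f2 e12 x|F1 F2 f1 f2]; last exact: phi_mono.
split; first exact: (phi_eq_face_sub HTU f1 f2 e12).
exact: (phi_eq_face_sub HTU f2 f1 (osm_eq_sym e12)).
Qed.
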